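(* Let $\theta=(\gamma,\mu,\sigma)\in\mathbb{R}\times\mathbb{R}\times(0,\infty)$ and $x\in\mathbb{R}$ with $1+\gamma z>0$, where $z=(x-\mu)/\sigma$, and let $u=u_\gamma(z)$. If $\gamma\ge0$ and $z\ge0$, then, with $\gamma^{-2}\log(1+\gamma z)$ and $\gamma^{-1}$ interpreted as $+\infty$ when $\gamma=0$, \[|\partial_\gamma\ell_\theta(x)|\le\max\Big\{\min\Big(\frac{z^2}{2},\frac1{\gamma^2}\log(1+\gamma z)\Big),\ \min\Big(z,\frac1\gamma\Big)\Big\}.\] If $\gamma\le0$ and $z\ge0$, then $|\partial_\gamma\ell_\theta(x)|\le\frac{\max(z^2,z)}{1+\gamma z}$. If $\gamma\ge0$ and $z\le0$, then $|\partial_\gamma\ell_\theta(x)|\le u^{1+\gamma}\max\{(\log u)^2,\log u\}$. If $\gamma\le0$ and $z\le0$, then $|\partial_\gamma\ell_\theta(x)|\le u\max\{(\log u)^2,\log u\}$.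
   Context: $u_\gamma(z)=(1+\gamma z)^{-1/\gamma}$ for $\gamma\ne0$ and $e^{-z}$ for $\gamma=0$. $\ell_\theta(x)=-\log\sigma-u+(\gamma+1)\log u$ is the GEV log-density on $\{1+\gamma z>0\}$ (GEV density $p_\theta(x)=\sigma^{-1}e^{-u}u^{\gamma+1}\mathbf 1(1+\gamma z>0)$). Its partial derivative in $\gamma$ is $\partial_\gamma\ell_\theta(x)=(1-u)\,\partial_\gamma\log u-\frac{z}{1+\gamma z}$, where $\partial_\gamma\log u=\int_0^z\frac{t}{(1+\gamma t)^2}dt$ (equal to $\frac1\gamma(\frac1\gamma\log(1+\gamma z)-\frac{z}{1+\gamma z})$ for $\gamma\ne0$ and $z^2/2$ for $\gamma=0$). *)

From Stdlib Require Import Reals.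
Open Scope R_scope.

Definition u_gam (g z : R) : R :=
  if Req_EM_T g 0 then exp (- z) else Rpower (1 + g * z) (- / g).

(* d/dgamma log u_gamma(z) = int_0^z t/(1+gamma t)^2 dt, in closed form. *)
Definition dlogu (g z : R) : R :=
  if Req_EM_T g 0 then z ^ 2 / 2
  else / g * (/ g * ln (1 + g * z) - z / (1 + g * z)).

Definition zstd (mu sigma x : R) : R := (x - mu) / sigma.

(* partial derivative in gamma of the GEV log-density l_theta(x),
   theta = (gamma, mu, sigma):  (1 - u) d_gamma log u - z/(1 + gamma z). *)
Definition dgamma_ell (g mu sigma x : R) : R :=
  let z := zstd mu sigma x in
  (1 - u_gam g z) * dlogu g z - z / (1 + g * z).

From Coquelicot Require Import Coquelicot.
From Stdlib Require Import Reals Lra Psatz.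
Open Scope R_scope.

(* Write a = 1 + g z, L = d/dg log u and q = z / a, so that the score is
   (1 - u) L - q.  One has L >= 0 because g^2 a L = a ln a - (a - 1), and
   ln u = - (ln a) / g has the sign of -z.  Hence |score| <= max(L, q) when
   z >= 0 (then u <= 1), and |score| <= max(u L, -q) when z <= 0 (then u >= 1).
   Using u^(1+g) = u / a, every case then reduces to the elementary bounds
   ln a <= a - 1 <= a ln a and ln(1 + w) - w / (1 + w) <= w^2 / 2 for w >= 0. *)

Lemma le_of_derive_nonneg (f df : R -> R) (a b : R) : a <= b ->
  (forall x, a <= x <= b -> is_derive f x (df x)) ->
  (forall x, a <= x <= b -> 0 <= df x) -> f a <= f b.
Proof.
  intros Hab Hd Hpos.
  destruct (MVT_gen f a b df) as [c [Hc Hf]];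
    rewrite ?Rmin_left, ?Rmax_right in * by lra.
  - intros x Hx; apply Hd; lra.
  - intros x Hx; apply derivable_continuous_pt.
    exists (df x); apply is_derive_Reals, Hd; lra.
  - assert (0 <= df c * (b - a)) by (apply Rmult_le_pos; [apply Hpos|]; lra).
    lra.
Qed.

Lemma ln_1p_le (w : R) : 0 < 1 + w -> ln (1 + w) <= w.
Proof.
  intros Hw; pose proof (exp_ineq1_le (ln (1 + w))); rewrite exp_ln in * by lra; lra.
Qed.

Lemma le_mul_ln_1p (w : R) : 0 < 1 + w -> w <= (1 + w) * ln (1 + w).
Proof.
  intros Hw.
  assert (Hinv := ln_1p_le (/ (1 + w) - 1) ltac:(pose proof (Rinv_0_lt_compat _ Hw); lra)).
  replace (1 + (/ (1 + w) - 1)) with (/ (1 + w)) in Hinv by ring.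
  rewrite ln_Rinv in Hinv by lra.
  assert ((1 + w) * - ln (1 + w) <= (1 + w) * (/ (1 + w) - 1))
    by (apply Rmult_le_compat_l; lra).
  replace ((1 + w) * (/ (1 + w) - 1)) with (- w) in * by (field; lra).
  lra.
Qed.

Lemma ln_1p_sub_div_le (w : R) : 0 <= w -> ln (1 + w) - w / (1 + w) <= w ^ 2 / 2.
Proof.
  intros Hw.
  enough (0 / (1 + 0) + 0 ^ 2 / 2 - ln (1 + 0)
          <= w / (1 + w) + w ^ 2 / 2 - ln (1 + w))
    by (rewrite Rplus_0_r, ln_1 in *; lra).
  apply (le_of_derive_nonneg (fun w => w / (1 + w) + w ^ 2 / 2 - ln (1 + w))
           (fun x => x ^ 2 * (2 + x) / (1 + x) ^ 2)); [lra | |].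
  - intros x Hx; auto_derive; [lra | field; lra].
  - intros x Hx; apply Rmult_le_pos; [nra |].
    apply Rlt_le, Rinv_0_lt_compat; nra.
Qed.

Lemma mul_ln_1p_sub_le_sqr (w : R) : 0 < 1 + w -> (1 + w) * ln (1 + w) - w <= w ^ 2.
Proof. intros Hw; pose proof (ln_1p_le w Hw); nra. Qed.

Lemma mul_ln_1p_sub_le_ln_sqr (w : R) :
  0 < 1 + w -> ln (1 + w) <= 1 -> (1 + w) * ln (1 + w) - w <= ln (1 + w) ^ 2.
Proof. intros Hw Hl; pose proof (ln_1p_le w Hw); nra. Qed.

Lemma mul_ln_1p_sub_le_mul_ln_sqr (w : R) :
  0 <= w -> (1 + w) * ln (1 + w) - w <= (1 + w) * ln (1 + w) ^ 2.
Proof.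
  intros Hw; pose proof (ln_1p_le w ltac:(lra)).
  assert (0 <= ln (1 + w)) by (rewrite <- ln_1; apply ln_le; lra).
  assert (0 <= (w - ln (1 + w)) * (1 - ln (1 + w) + ln (1 + w) ^ 2))
    by (apply Rmult_le_pos; nra).
  nra.
Qed.

Lemma Rabs_mix_le_Rmax (u L q : R) :
  0 <= u <= 1 -> 0 <= L -> 0 <= q -> Rabs ((1 - u) * L - q) <= Rmax L q.
Proof.
  intros Hu HL Hq; pose proof (Rmax_l L q); pose proof (Rmax_r L q).
  apply Rabs_le; nra.
Qed.

Lemma Rabs_mix_le_Rmax_ge1 (u L q : R) :
  1 <= u -> 0 <= L -> q <= 0 -> Rabs ((1 - u) * L - q) <= Rmax (u * L) (- q).
Proof.
  intros Hu HL Hq; pose proof (Rmax_l (u * L) (- q)); pose proof (Rmax_r (u * L) (- q)).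
  apply Rabs_le; nra.
Qed.

Lemma Rmax_le_compat (a b c d : R) : a <= c -> b <= d -> Rmax a b <= Rmax c d.
Proof.
  intros; apply Rmax_lub; eapply Rle_trans; eauto using Rmax_l, Rmax_r.
Qed.

Definition gev_score (g z : R) : R :=
  (1 - u_gam g z) * dlogu g z - z / (1 + g * z).

Lemma u_gam_zero (z : R) : u_gam 0 z = exp (- z).
Proof. unfold u_gam; destruct (Req_EM_T 0 0); [reflexivity | contradiction]. Qed.

Lemma dlogu_zero (z : R) : dlogu 0 z = z ^ 2 / 2.
Proof. unfold dlogu; destruct (Req_EM_T 0 0); [reflexivity | contradiction]. Qed.

Section GevScore.

Variables g z : R.
Hypothesis Hpos : 0 < 1 + g * z.

Lemma u_gam_pos : 0 < u_gam g z.
Proof. unfold u_gam; destruct (Req_EM_T g 0); apply exp_pos. Qed.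

Lemma ln_u_gam_nonzero : g <> 0 -> g * ln (u_gam g z) = - ln (1 + g * z).
Proof.
  intros Hg; unfold u_gam; destruct (Req_EM_T g 0) as [|_]; [contradiction|].
  rewrite ln_Rpower; field; exact Hg.
Qed.

Lemma Rpower_u_gam : g <> 0 ->
  Rpower (u_gam g z) (1 + g) * (1 + g * z) = u_gam g z.
Proof.
  intros Hg; unfold Rpower at 1.
  replace ((1 + g) * ln (u_gam g z)) with (ln (u_gam g z) + - ln (1 + g * z))
    by (rewrite <- ln_u_gam_nonzero by exact Hg; ring).
  rewrite exp_plus, exp_ln by exact u_gam_pos.
  rewrite exp_Ropp, exp_ln by exact Hpos.
  field; lra.
Qed.

Lemma ln_u_gam_sqr : g <> 0 -> g ^ 2 * ln (u_gam g z) ^ 2 = ln (1 + g * z) ^ 2.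
Proof.
  intros Hg; replace (ln (1 + g * z)) with (- (g * ln (u_gam g z)))
    by (rewrite ln_u_gam_nonzero by exact Hg; ring).
  ring.
Qed.

Lemma dlogu_nonzero : g <> 0 ->
  g ^ 2 * dlogu g z = ln (1 + g * z) - g * z / (1 + g * z).
Proof.
  intros Hg; unfold dlogu; destruct (Req_EM_T g 0) as [|_]; [contradiction|].
  field; lra.
Qed.

Lemma mul_dlogu_nonzero : g <> 0 ->
  g ^ 2 * ((1 + g * z) * dlogu g z) = (1 + g * z) * ln (1 + g * z) - g * z.
Proof.
  intros Hg.
  replace (g ^ 2 * ((1 + g * z) * dlogu g z))
    with ((1 + g * z) * (g ^ 2 * dlogu g z)) by ring.
  rewrite dlogu_nonzero by exact Hg; field; lra.
Qed.

Lemma dlogu_nonneg : 0 <= dlogu g z.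
Proof.
  destruct (Req_dec g 0) as [-> | Hg]; [rewrite dlogu_zero; nra |].
  assert (Hg2 : 0 < g ^ 2) by (apply pow2_gt_0; exact Hg).
  pose proof (le_mul_ln_1p _ Hpos).
  assert (0 <= (1 + g * z) * dlogu g z) by (pose proof (mul_dlogu_nonzero Hg); nra).
  nra.
Qed.

Lemma mul_dlogu_le_sqr : (1 + g * z) * dlogu g z <= z ^ 2.
Proof.
  destruct (Req_dec g 0) as [-> | Hg]; [rewrite dlogu_zero; nra |].
  apply (Rmult_le_reg_l (g ^ 2)); [apply pow2_gt_0; exact Hg |].
  rewrite mul_dlogu_nonzero by exact Hg.
  replace (g ^ 2 * z ^ 2) with ((g * z) ^ 2) by ring.
  apply mul_ln_1p_sub_le_sqr, Hpos.
Qed.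

Lemma ln_u_gam_nonpos : 0 <= z -> ln (u_gam g z) <= 0.
Proof.
  intros Hz.
  destruct (Req_dec g 0) as [-> | Hg]; [rewrite u_gam_zero, ln_exp; lra |].
  pose proof (ln_u_gam_nonzero Hg).
  pose proof (ln_1p_le _ Hpos); pose proof (le_mul_ln_1p _ Hpos).
  destruct (Rlt_or_le 0 g).
  - assert (0 <= ln (1 + g * z)) by nra. nra.
  - assert (ln (1 + g * z) <= 0) by nra. nra.
Qed.

Lemma ln_u_gam_nonneg : z <= 0 -> 0 <= ln (u_gam g z).
Proof.
  intros Hz.
  destruct (Req_dec g 0) as [-> | Hg]; [rewrite u_gam_zero, ln_exp; lra |].
  pose proof (ln_u_gam_nonzero Hg).
  pose proof (ln_1p_le _ Hpos); pose proof (le_mul_ln_1p _ Hpos).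
  destruct (Rlt_or_le 0 g).
  - assert (ln (1 + g * z) <= 0) by nra. nra.
  - assert (0 <= ln (1 + g * z)) by nra. nra.
Qed.

Lemma u_gam_le1 : 0 <= z -> u_gam g z <= 1.
Proof.
  intros Hz; apply Rnot_lt_le; intros Hu.
  pose proof (ln_increasing 1 _ Rlt_0_1 Hu); rewrite ln_1 in *.
  pose proof (ln_u_gam_nonpos Hz); lra.
Qed.

Lemma u_gam_ge1 : z <= 0 -> 1 <= u_gam g z.
Proof.
  intros Hz; apply Rnot_lt_le; intros Hu.
  pose proof (ln_increasing _ 1 u_gam_pos Hu); rewrite ln_1 in *.
  pose proof (ln_u_gam_nonneg Hz); lra.
Qed.

Lemma gev_score_abs_le_Rmax_pos : 0 <= z ->
  Rabs (gev_score g z) <= Rmax (dlogu g z) (z / (1 + g * z)).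
Proof.
  intros Hz; apply Rabs_mix_le_Rmax.
  - split; [apply Rlt_le, u_gam_pos | apply u_gam_le1]; assumption.
  - apply dlogu_nonneg.
  - apply Rdiv_le_0_compat; assumption.
Qed.

Lemma gev_score_abs_le_Rmax_neg : z <= 0 ->
  Rabs (gev_score g z) <= Rmax (u_gam g z * dlogu g z) (- (z / (1 + g * z))).
Proof.
  intros Hz; apply Rabs_mix_le_Rmax_ge1.
  - apply u_gam_ge1; assumption.
  - apply dlogu_nonneg.
  - unfold Rdiv; apply Rmult_le_0_r; [| apply Rlt_le, Rinv_0_lt_compat]; assumption.
Qed.

Lemma gev_score_abs_le_sqr : 0 <= z ->
  Rabs (gev_score g z) <= Rmax (z ^ 2) z / (1 + g * z).
Proof.
  intros Hz; eapply Rle_trans; [apply gev_score_abs_le_Rmax_pos, Hz |].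
  apply (Rmult_le_reg_l (1 + g * z)); [exact Hpos |].
  rewrite <- RmaxRmult by lra.
  replace ((1 + g * z) * (Rmax (z ^ 2) z / (1 + g * z))) with (Rmax (z ^ 2) z)
    by (field; lra).
  replace ((1 + g * z) * (z / (1 + g * z))) with z by (field; lra).
  apply Rmax_le_compat; [apply mul_dlogu_le_sqr | lra].
Qed.

Lemma gev_score_abs_le_pos_pos : 0 < g -> 0 <= z ->
  Rabs (gev_score g z)
  <= Rmax (Rmin (z ^ 2 / 2) (/ g ^ 2 * ln (1 + g * z))) (Rmin z (/ g)).
Proof.
  intros Hg Hz; eapply Rle_trans; [apply gev_score_abs_le_Rmax_pos, Hz |].
  assert (Hg2 : 0 < g ^ 2) by (apply pow2_gt_0; lra).
  assert (Hdl := dlogu_nonzero ltac:(lra)).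
  assert (Hq0 : 0 <= g * z / (1 + g * z)) by (apply Rdiv_le_0_compat; nra).
  apply Rmax_le_compat; apply Rmin_glb.
  - apply (Rmult_le_reg_l (g ^ 2)); [exact Hg2 |]; rewrite Hdl.
    pose proof (ln_1p_sub_div_le (g * z) ltac:(nra)); lra.
  - apply (Rmult_le_reg_l (g ^ 2)); [exact Hg2 |]; rewrite Hdl.
    replace (g ^ 2 * (/ g ^ 2 * ln (1 + g * z))) with (ln (1 + g * z))
      by (field; lra).
    lra.
  - apply (Rmult_le_reg_l (1 + g * z)); [exact Hpos |].
    replace ((1 + g * z) * (z / (1 + g * z))) with z by (field; lra).
    nra.
  - apply (Rmult_le_reg_l g); [exact Hg |].
    replace (g * / g) with 1 by (field; lra).
    replace (g * (z / (1 + g * z))) with (1 - / (1 + g * z)) by (field; lra).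
    pose proof (Rinv_0_lt_compat _ Hpos); lra.
Qed.

Lemma gev_score_abs_le_neg_nonneg : 0 <= g -> z <= 0 ->
  Rabs (gev_score g z)
  <= Rpower (u_gam g z) (1 + g) * Rmax (ln (u_gam g z) ^ 2) (ln (u_gam g z)).
Proof.
  intros Hg Hz.
  pose proof (u_gam_ge1 Hz) as Hu.
  pose proof (ln_u_gam_nonneg Hz) as Hl.
  eapply Rle_trans; [apply gev_score_abs_le_Rmax_neg, Hz |].
  rewrite <- RmaxRmult by (apply Rlt_le, exp_pos).
  destruct (Req_dec g 0) as [-> | Hg0].
  { rewrite u_gam_zero, dlogu_zero, ln_exp, Rplus_0_r, Rpower_1 by apply exp_pos.
    rewrite u_gam_zero in Hu.
    replace (1 + 0 * z) with 1 by ring.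
    apply Rmax_le_compat; nra. }
  assert (Hgp : 0 < g) by lra.
  assert (Hc := Rpower_u_gam Hg0).
  assert (Hlg := ln_u_gam_nonzero Hg0).
  assert (HaL : (1 + g * z) * dlogu g z <= ln (u_gam g z) ^ 2).
  { apply (Rmult_le_reg_l (g ^ 2)); [apply pow2_gt_0; lra |].
    rewrite mul_dlogu_nonzero, ln_u_gam_sqr by exact Hg0.
    pose proof (ln_1p_le _ Hpos).
    apply mul_ln_1p_sub_le_ln_sqr; nra. }
  assert (Hzu : - z <= u_gam g z * ln (u_gam g z)).
  { apply (Rmult_le_reg_l g); [exact Hgp |].
    pose proof (ln_1p_le _ Hpos).
    assert (g * ln (u_gam g z) <= g * (u_gam g z * ln (u_gam g z)))
      by (apply Rmult_le_compat_l; nra).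
    nra. }
  assert (Hc0 : 0 < Rpower (u_gam g z) (1 + g)) by apply exp_pos.
  apply Rmax_le_compat.
  - replace (u_gam g z * dlogu g z)
      with (Rpower (u_gam g z) (1 + g) * ((1 + g * z) * dlogu g z))
      by (rewrite <- Rmult_assoc, Hc; reflexivity).
    apply Rmult_le_compat_l; lra.
  - apply (Rmult_le_reg_l (1 + g * z)); [exact Hpos |].
    replace ((1 + g * z) * - (z / (1 + g * z))) with (- z) by (field; lra).
    rewrite <- Rmult_assoc, (Rmult_comm (1 + g * z)), Hc.
    exact Hzu.
Qed.

Lemma gev_score_abs_le_neg_npos : g <= 0 -> z <= 0 ->
  Rabs (gev_score g z)
  <= u_gam g z * Rmax (ln (u_gam g z) ^ 2) (ln (u_gam g z)).
Proof.
  intros Hg Hz.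
  pose proof (u_gam_ge1 Hz) as Hu.
  pose proof (ln_u_gam_nonneg Hz) as Hl.
  eapply Rle_trans; [apply gev_score_abs_le_Rmax_neg, Hz |].
  rewrite <- RmaxRmult by lra.
  destruct (Req_dec g 0) as [-> | Hg0].
  { rewrite u_gam_zero, dlogu_zero, ln_exp in *.
    replace (1 + 0 * z) with 1 by ring.
    apply Rmax_le_compat; nra. }
  assert (Hgn : g < 0) by lra.
  assert (Hlg := ln_u_gam_nonzero Hg0).
  assert (HL : dlogu g z <= ln (u_gam g z) ^ 2).
  { apply (Rmult_le_reg_l (g ^ 2 * (1 + g * z))); [apply Rmult_lt_0_compat; nra |].
    replace (g ^ 2 * (1 + g * z) * dlogu g z)
      with (g ^ 2 * ((1 + g * z) * dlogu g z)) by ring.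
    replace (g ^ 2 * (1 + g * z) * ln (u_gam g z) ^ 2)
      with ((1 + g * z) * (g ^ 2 * ln (u_gam g z) ^ 2)) by ring.
    rewrite mul_dlogu_nonzero, ln_u_gam_sqr by exact Hg0.
    apply mul_ln_1p_sub_le_mul_ln_sqr; nra. }
  assert (Hq : - (z / (1 + g * z)) <= ln (u_gam g z)).
  { apply (Rmult_le_reg_l (- g * (1 + g * z))); [nra |].
    replace (- g * (1 + g * z) * - (z / (1 + g * z))) with (g * z) by (field; lra).
    replace (- g * (1 + g * z) * ln (u_gam g z))
      with ((1 + g * z) * - (g * ln (u_gam g z))) by ring.
    rewrite Hlg, Ropp_involutive.
    apply le_mul_ln_1p, Hpos. }
  apply Rmax_le_compat; nra.
Qed.

End GevScore.

Lemma gev_score_abs_le_zero (z : R) : 0 <= z ->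
  Rabs (gev_score 0 z) <= Rmax (z ^ 2 / 2) z.
Proof.
  intros Hz; eapply Rle_trans; [apply (gev_score_abs_le_Rmax_pos 0 z); lra |].
  rewrite dlogu_zero; replace (z / (1 + 0 * z)) with z by field.
  apply Rle_refl.
Qed.

Theorem lemmaB4 (g mu sigma x : R) :
  0 < sigma ->
  0 < 1 + g * zstd mu sigma x ->
  let z := zstd mu sigma x in
  let u := u_gam g z in
  let d := Rabs (dgamma_ell g mu sigma x) in
  (* case gamma >= 0, z >= 0; gamma = 0 uses the +infinity convention *)
  (g = 0 -> 0 <= z -> d <= Rmax (z ^ 2 / 2) z) /\
  (0 < g -> 0 <= z ->
     d <= Rmax (Rmin (z ^ 2 / 2) (/ g ^ 2 * ln (1 + g * z))) (Rmin z (/ g))) /\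
  (* case gamma <= 0, z >= 0 *)
  (g <= 0 -> 0 <= z -> d <= Rmax (z ^ 2) z / (1 + g * z)) /\
  (* case gamma >= 0, z <= 0 *)
  (0 <= g -> z <= 0 -> d <= Rpower u (1 + g) * Rmax (ln u ^ 2) (ln u)) /\
  (* case gamma <= 0, z <= 0 *)
  (g <= 0 -> z <= 0 -> d <= u * Rmax (ln u ^ 2) (ln u)).
Proof.
  intros _ Hpos z u d; unfold d, u, z.
  change (dgamma_ell g mu sigma x) with (gev_score g (zstd mu sigma x)).
  revert Hpos; generalize (zstd mu sigma x); clear z u d; intros z Hpos.
  split; [| split; [| split; [| split]]]; intros Hg Hz.
  - subst g; apply gev_score_abs_le_zero, Hz.
  - apply gev_score_abs_le_pos_pos; assumption.
  - apply gev_score_abs_le_sqr; assumption.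
  - apply gev_score_abs_le_neg_nonneg; assumption.
  - apply gev_score_abs_le_neg_npos; assumption.
Qed.
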